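(* Let $R$ be an $n^2\times n^2$ solution of the QYBE satisfying the Hecke condition $(PR-q)(PR+q^{-1})=0$, and regard $\Omega_q(R)$ as a superalgebra with $x_i$ even and $\mathrm dx_i$ odd. Let $\alpha,\beta,\gamma,\delta$ satisfy the relations of $GL_q^\Omega(1|1)$ and form, in the graded tensor product of $GL_q^\Omega(1|1)$ with $\Omega_q(R)$ (odd elements from different factors anticommuting, all other pairs commuting), $x_i'=\alpha x_i+\beta\,\mathrm dx_i$, $\mathrm dx_i'=\gamma x_i+\delta\,\mathrm dx_i$ for $i=1,\dots,n$. Then the $x_i',\mathrm dx_i'$ satisfy the same relations as the generators of $\Omega_q(R)$.
   Context: $P$ is the permutation matrix; repeated indices summed. $\Omega_q(R)$ is generated by $x_1,\dots,x_n,\mathrm dx_1,\dots,\mathrm dx_n$ with relations $x_ix_j=q^{-1}x_bx_aR^a{}_i{}^b{}_j$, $\mathrm dx_i\,x_j=q\,x_b\,\mathrm dx_aR^a{}_i{}^b{}_j$, $\mathrm dx_i\,\mathrm dx_j=-q\,\mathrm dx_b\,\mathrm dx_aR^a{}_i{}^b{}_j$. $GL_q^\Omega(1|1)$ is the super-Hopf algebra generated by $\alpha,\delta$ even and invertible and $\beta,\gamma$ odd with relations $\beta\alpha=\alpha\beta$, $\gamma\alpha=q^2\alpha\gamma$, $\delta\beta=\beta\delta$, $\delta\gamma=q^{-2}\gamma\delta$, $\gamma\beta=-q^2\beta\gamma$, $\delta\alpha-\alpha\delta=(1-q^2)\beta\gamma$, $\beta^2=\gamma^2=0$, with matrix super-coproduct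 on $\begin{pmatrix}\alpha&\beta\\\gamma&\delta\end{pmatrix}$. *)

From HB Require Import structures.
From mathcomp Require Import all_boot all_order all_algebra.
Set Implicit Arguments.
Unset Strict Implicit.
Unset Printing Implicit Defensive.
Import GRing.Theory.
Local Open Scope ring_scope.

(* V = K^n with basis indexed by 'I_n.  V (x) V is indexed by
   'I_(n*n) via mxvec_index a b (the pair (a,b)), and V (x) V (x) V by
   'I_(n*n*n) via mxvec_index (mxvec_index a b) c.
   The n^2 x n^2 matrix R has entries R^a_i^b_j := R_{(a,b),(i,j)}
   (upper indices = row, lower indices = column). *)

Section RDefs.
Variables (K : fieldType) (n : nat).

Definition Rent (R : 'M[K]_(n * n)) (a i b j : 'I_n) : K :=
  R (mxvec_index a b) (mxvec_index i j).

Definition Pswap : 'M[K]_(n * n) :=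
  \matrix_(u, v) \sum_(a < n) \sum_(b < n)
     ((u == mxvec_index a b) && (v == mxvec_index b a))%:R.

Definition ind3 (a b c : 'I_n) : 'I_(n * n * n) :=
  mxvec_index (mxvec_index a b) c.

Definition mx3 (f : 'I_n -> 'I_n -> 'I_n -> 'I_n -> 'I_n -> 'I_n -> K)
  : 'M[K]_(n * n * n) :=
  \matrix_(u, v) \sum_(a < n) \sum_(b < n) \sum_(c < n)
     \sum_(a' < n) \sum_(b' < n) \sum_(c' < n)
       ((u == ind3 a b c) && (v == ind3 a' b' c'))%:R * f a b c a' b' c'.

Definition R12 (R : 'M[K]_(n * n)) :=
  mx3 (fun a b c a' b' c' => Rent R a a' b b' * (c == c')%:R).
Definition R13 (R : 'M[K]_(n * n)) :=
  mx3 (fun a b c a' b' c' => Rent R a a' c c' * (b == b')%:R).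
Definition R23 (R : 'M[K]_(n * n)) :=
  mx3 (fun a b c a' b' c' => Rent R b b' c c' * (a == a')%:R).

Definition QYBE (R : 'M[K]_(n * n)) : Prop :=
  R12 R *m R13 R *m R23 R = R23 R *m R13 R *m R12 R.

Definition Hecke (q : K) (R : 'M[K]_(n * n)) : Prop :=
  (Pswap *m R - q%:M) *m (Pswap *m R + q^-1%:M) = 0.

Definition Omega_rels (A : algType K) (q : K) (R : 'M[K]_(n * n))
  (x dx : 'I_n -> A) : Prop :=
  forall i j : 'I_n,
    [/\ x i * x j = \sum_(a < n) \sum_(b < n) (q^-1 * Rent R a i b j) *: (x b * x a),
        dx i * x j = \sum_(a < n) \sum_(b < n) (q * Rent R a i b j) *: (x b * dx a)
      & dx i * dx j = \sum_(a < n) \sum_(b < n) (- q * Rent R a i b j) *: (dx b * dx a)].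

End RDefs.

(* defining relations of GL_q^Omega(1|1) (alpha, delta even invertible;
   beta, gamma odd) on elements of a K-algebra *)
Definition GLq11_rels (K : fieldType) (A : algType K) (q : K)
  (al be ga de : A) : Prop :=
  [/\ (exists al' : A, al * al' = 1 /\ al' * al = 1),
      (exists de' : A, de * de' = 1 /\ de' * de = 1),
      [/\ be * al = al * be,
          ga * al = q ^+ 2 *: (al * ga),
          de * be = be * de
        & de * ga = q ^- 2 *: (ga * de)],
      [/\ ga * be = - q ^+ 2 *: (be * ga)
        & de * al - al * de = (1 - q ^+ 2) *: (be * ga)]
    & be * be = 0 /\ ga * ga = 0].

(* commutation rules of the graded tensor product GL_q^Omega(1|1) (x) Omega_q(R):
   elements from different factors commute, except that the odd ones
   (beta, gamma vs. dx_i) anticommute *)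
Definition graded_mixing (K : fieldType) (A : algType K) (n : nat)
  (al be ga de : A) (x dx : 'I_n -> A) : Prop :=
  forall i : 'I_n,
    [/\ [/\ al * x i = x i * al, be * x i = x i * be,
            ga * x i = x i * ga & de * x i = x i * de],
        al * dx i = dx i * al, de * dx i = dx i * de,
        be * dx i = - (dx i * be)
      & ga * dx i = - (dx i * ga)].

From mathcomp Require Import all_boot all_order all_algebra.
From mathcomp Require Import ring.
Set Implicit Arguments.
Unset Strict Implicit.
Unset Printing Implicit Defensive.
Import GRing.Theory.
Local Open Scope ring_scope.

(* Let PR act on
   two-index families by f |-> (i, j |-> sum_(a,b) R^a_i^b_j f b a).  The
   relations of Omega_q(R) say that this action multiplies the families
   x_b x_a, x_b dx_a, dx_b dx_a by q, q^-1 (landing on dx x), -q^-1, and the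
   Hecke condition (PR)^2 = (q - q^-1) PR + 1 then determines it on dx_b x_a.
   Since al, de commute and be, ga anticommute with the odd generators, a
   product of two primed generators is a combination of these four families
   with left coefficients in GL_q(1|1); the action commutes with left
   multiplication, so each relation for the primed generators reduces to four
   identities between quadratic monomials in al, be, ga, de, which follow
   from the relations of GL_q^Omega(1|1). *)

Lemma mxvec_index_eq m n (a c : 'I_m) (b d : 'I_n) :
  (mxvec_index a b == mxvec_index c d) = (a == c) && (b == d).
Proof.
by rewrite /mxvec_index (inj_eq (@cast_ord_inj _ _ _)) (inj_eq (@enum_rank_inj _)).
Qed.

Lemma big_mxvec_index (V : nmodType) m n (F : 'I_(m * n) -> V) :
  \sum_k F k = \sum_(a < m) \sum_(b < n) F (mxvec_index a b).
Proof. by rewrite (reindex _ (curry_mxvec_bij _ _)) pair_bigA; apply: eq_bigr => -[]. Qed.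

Section MatrixAction.
Variables (K : comPzRingType) (A : lmodType K) (n : nat).
Implicit Types (M N : 'M[K]_(n * n)) (f g : 'I_n -> 'I_n -> A).

Definition mxact M f (i j : 'I_n) : A :=
  \sum_(a < n) \sum_(b < n) M (mxvec_index a b) (mxvec_index i j) *: f a b.

Lemma eq_mxact M f g :
  (forall a b, f a b = g a b) -> forall i j, mxact M f i j = mxact M g i j.
Proof. by move=> fg i j; apply: eq_bigr => a _; apply: eq_bigr => b _; rewrite fg. Qed.

Lemma mxactDf M f g i j :
  mxact M (fun a b => f a b + g a b) i j = mxact M f i j + mxact M g i j.
Proof.
rewrite -big_split; apply: eq_bigr => a _.
by rewrite -big_split; apply: eq_bigr => b _; rewrite scalerDr.
Qed.

Lemma mxactZf M c f i j : mxact M (fun a b => c *: f a b) i j = c *: mxact M f i j.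
Proof.
rewrite scaler_sumr; apply: eq_bigr => a _; rewrite scaler_sumr.
by apply: eq_bigr => b _; rewrite !scalerA mulrC.
Qed.

Lemma mxactD M N f i j : mxact (M + N) f i j = mxact M f i j + mxact N f i j.
Proof.
rewrite -big_split; apply: eq_bigr => a _.
by rewrite -big_split; apply: eq_bigr => b _; rewrite mxE scalerDl.
Qed.

Lemma mxactZ c M f i j : mxact (c *: M) f i j = c *: mxact M f i j.
Proof.
rewrite scaler_sumr; apply: eq_bigr => a _; rewrite scaler_sumr.
by apply: eq_bigr => b _; rewrite mxE scalerA.
Qed.

Lemma mxact1 f i j : mxact 1%:M f i j = f i j.
Proof.
rewrite /mxact (bigD1 i) //= [X in _ + X]big1 => [|a ai]; last first.
  by apply: big1 => b _; rewrite mxE mxvec_index_eq (negPf ai) scale0r.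
rewrite addr0 (bigD1 j) //= [X in _ + X]big1 => [|b bj]; last first.
  by rewrite mxE mxvec_index_eq eqxx (negPf bj) scale0r.
by rewrite addr0 mxE eqxx scale1r.
Qed.

Lemma mxact_mul M N f i j : mxact M (mxact N f) i j = mxact (N *m M) f i j.
Proof.
transitivity (\sum_(p : 'I_n * 'I_n) \sum_(r : 'I_n * 'I_n)
    (M (mxvec_index p.1 p.2) (mxvec_index i j)
       * N (mxvec_index r.1 r.2) (mxvec_index p.1 p.2)) *: f r.1 r.2).
  rewrite {1}/mxact pair_bigA; apply: eq_bigr => -[a b] _ /=.
  by rewrite /mxact pair_bigA scaler_sumr; apply: eq_bigr => -[c d] _; rewrite scalerA.
rewrite exchange_big [RHS]pair_bigA; apply: eq_bigr => -[c d] _ /=.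
rewrite mxE big_mxvec_index pair_bigA scaler_suml.
by apply: eq_bigr => -[a b] _; rewrite mulrC.
Qed.

End MatrixAction.

Lemma mxact_mull (K : comPzRingType) (A : algType K) n (M : 'M[K]_(n * n))
    (c : A) (f : 'I_n -> 'I_n -> A) i j :
  mxact M (fun a b => c * f a b) i j = c * mxact M f i j.
Proof.
rewrite mulr_sumr; apply: eq_bigr => a _; rewrite mulr_sumr.
by apply: eq_bigr => b _; rewrite scalerAr.
Qed.

Section Braiding.
Variables (K : fieldType) (n : nat) (R : 'M[K]_(n * n)).
Local Notation PR := (Pswap K n *m R).

Lemma Pswap_row (b a : 'I_n) v :
  Pswap K n (mxvec_index b a) v = (v == mxvec_index a b)%:R.
Proof.
rewrite mxE (bigD1 b) //= [X in _ + X]big1 => [|c cb]; last first.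
  by apply: big1 => d _; rewrite mxvec_index_eq eq_sym (negPf cb).
rewrite addr0 (bigD1 a) //= [X in _ + X]big1 => [|d da]; last first.
  by rewrite mxvec_index_eq [a == d]eq_sym (negPf da) andbF.
by rewrite addr0 mxvec_index_eq !eqxx.
Qed.

Lemma Pswap_mulmx_row (b a : 'I_n) v : PR (mxvec_index b a) v = R (mxvec_index a b) v.
Proof.
rewrite mxE (bigD1 (mxvec_index a b)) //= Pswap_row eqxx mul1r big1 ?addr0 // => w wab.
by rewrite Pswap_row (negPf wab) mul0r.
Qed.

Lemma sum_Rent_mxact (A : lmodType K) (s : K) (f : 'I_n -> 'I_n -> A) i j :
  \sum_(a < n) \sum_(b < n) (s * Rent R a i b j) *: f b a = s *: mxact PR f i j.
Proof.
rewrite exchange_big scaler_sumr; apply: eq_bigr => b _; rewrite scaler_sumr.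
by apply: eq_bigr => a _; rewrite Pswap_mulmx_row scalerA.
Qed.

Variable q : K.
Hypotheses (q_neq0 : q != 0) (HR : Hecke q R).

Lemma Hecke_PR_sqr : PR *m PR = (q - q^-1) *: PR + 1%:M.
Proof.
apply/eqP; rewrite -subr_eq0 -HR mulmxDr !mulmxBl mul_mx_scalar !mul_scalar_mx.
rewrite scale_scalar_mx mulfV // scalerBl opprD opprB !addrA.
by apply/eqP; congr (_ - _); apply: addrAC.
Qed.

Lemma mxact_Hecke (A : lmodType K) (f : 'I_n -> 'I_n -> A) i j :
  mxact PR (mxact PR f) i j = (q - q^-1) *: mxact PR f i j + f i j.
Proof. by rewrite mxact_mul Hecke_PR_sqr mxactD mxactZ mxact1. Qed.

End Braiding.

Section OmegaQuadratic.
Variables (K : fieldType) (A : algType K) (n : nat) (q : K) (R : 'M[K]_(n * n)).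
Variables (x dx : 'I_n -> A).
Hypotheses (q_neq0 : q != 0) (HR : Hecke q R) (HO : Omega_rels q R x dx).
Local Notation PR := (Pswap K n *m R).

Lemma mxact_xx i j : mxact PR (fun b a => x b * x a) i j = q *: (x i * x j).
Proof. by have [-> _ _] := HO i j; rewrite sum_Rent_mxact scalerA mulfV ?scale1r. Qed.

Lemma mxact_xdx i j : mxact PR (fun b a => x b * dx a) i j = q^-1 *: (dx i * x j).
Proof. by have [_ -> _] := HO i j; rewrite sum_Rent_mxact scalerA mulVf ?scale1r. Qed.

Lemma mxact_dxdx i j : mxact PR (fun b a => dx b * dx a) i j = - q^-1 *: (dx i * dx j).
Proof.
by have [_ _ ->] := HO i j; rewrite sum_Rent_mxact scalerA mulrN mulNr mulVf ?opprK ?scale1r.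
Qed.

Lemma mxact_dxx i j :
  mxact PR (fun b a => dx b * x a) i j = q *: (x i * dx j) + (q - q^-1) *: (dx i * x j).
Proof.
have dxx_xdx b a : dx b * x a = q *: mxact PR (fun b a => x b * dx a) b a.
  by have [_ -> _] := HO b a; rewrite sum_Rent_mxact.
rewrite (eq_mxact _ dxx_xdx) mxactZf (mxact_Hecke q_neq0 HR) mxact_xdx.
by rewrite scalerDr !scalerA mulrAC mulfV // mul1r addrC.
Qed.

Definition skew_central (e : K) (c : A) :=
  (forall k, x k * c = c * x k) /\ (forall k, dx k * c = e *: (c * dx k)).

Definition gen_comb (u v : A) (k : 'I_n) := u * x k + v * dx k.

Lemma mul_gen_comb (e_w e_z : K) (u v w z : A) i j :
  skew_central e_w w -> skew_central e_z z ->
  gen_comb u v i * gen_comb w z j =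
  (u * w) * (x i * x j) + (u * z) * (x i * dx j)
  + (e_w *: (v * w)) * (dx i * x j) + (e_z *: (v * z)) * (dx i * dx j).
Proof.
move=> [xw dxw] [xz dxz]; rewrite /gen_comb mulrDl !mulrDr addrA -!mulrA.
by rewrite !(mulrA (x i)) !(mulrA (dx i)) xw xz dxw dxz -!scalerAl -!scalerAr -!mulrA.
Qed.

Lemma gen_comb_Omega_rel (s e_w e_z e_w' e_z' : K) (u v w z u' v' w' z' : A) i j :
  skew_central e_w w -> skew_central e_z z ->
  skew_central e_w' w' -> skew_central e_z' z' ->
  u * w = (s * q) *: (u' * w') ->
  u * z = (s * q * e_w') *: (v' * w') ->
  e_w *: (v * w) = (s / q) *: (u' * z') + (s * (q - q^-1) * e_w') *: (v' * w') ->
  e_z *: (v * z) = (- s / q * e_z') *: (v' * z') ->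
  gen_comb u v i * gen_comb w z j =
  \sum_(a < n) \sum_(b < n) (s * Rent R a i b j) *: (gen_comb u' v' b * gen_comb w' z' a).
Proof.
(* the four conditions match the coefficients of x x, x dx, dx x and dx dx *)
move=> cw cz cw' cz' e1 e2 e3 e4.
rewrite sum_Rent_mxact (eq_mxact _ (fun b a => mul_gen_comb u' v' b a cw' cz')).
rewrite !mxactDf !mxact_mull mxact_xx mxact_xdx mxact_dxx mxact_dxdx.
rewrite (mul_gen_comb _ _ _ _ cw cz) e1 e2 e3 e4.
rewrite mulrDl !mulrDr -!scalerAl -!scalerAr !scalerDr !scalerA [in LHS]addrACA.
by congr (_ *: _ + _ *: _ + (_ *: _ + _ *: _) + _ *: _); ring.
Qed.

End OmegaQuadratic.

Lemma graded_mixing_skew_central (K : fieldType) (A : algType K) n (al be ga de : A)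
    (x dx : 'I_n -> A) :
  graded_mixing al be ga de x dx ->
  [/\ skew_central x dx 1 al, skew_central x dx (-1) be,
      skew_central x dx (-1) ga & skew_central x dx 1 de].
Proof.
move=> mix; split; split=> k; have [[xal xbe xga xde] dxal dxde dxbe dxga] := mix k;
  by rewrite ?scale1r ?scaleN1r ?(xal, xbe, xga, xde, dxal, dxde, dxbe, dxga) ?opprK.
Qed.

Section Coaction.
Variables (K : fieldType) (A : algType K) (n : nat) (q : K) (R : 'M[K]_(n * n)).
Variables (x dx : 'I_n -> A) (al be ga de : A).
Hypotheses (q_neq0 : q != 0) (HR : Hecke q R) (HO : Omega_rels q R x dx).
Local Notation x' := (gen_comb x dx al be).
Local Notation dx' := (gen_comb x dx ga de).

Lemma Omega_xx_coaction i j :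
  skew_central x dx 1 al -> skew_central x dx (-1) be ->
  be * al = al * be -> be * be = 0 ->
  x' i * x' j = \sum_(a < n) \sum_(b < n) (q^-1 * Rent R a i b j) *: (x' b * x' a).
Proof.
move=> cal cbe beal bebe.
apply: (gen_comb_Omega_rel q_neq0 HR HO _ _ cal cbe cal cbe).
- by rewrite mulVf ?scale1r.
- by rewrite mulVf // mulr1 scale1r beal.
- by rewrite beal -scalerDl mulr1; congr (_ *: _); field.
- by rewrite bebe !scaler0.
Qed.

Lemma Omega_dxx_coaction i j :
  skew_central x dx 1 al -> skew_central x dx (-1) be ->
  skew_central x dx (-1) ga -> skew_central x dx 1 de ->
  ga * al = q ^+ 2 *: (al * ga) -> de * be = be * de ->
  ga * be = - q ^+ 2 *: (be * ga) ->
  de * al - al * de = (1 - q ^+ 2) *: (be * ga) ->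
  dx' i * x' j = \sum_(a < n) \sum_(b < n) (q * Rent R a i b j) *: (x' b * dx' a).
Proof.
move=> cal cbe cga cde gaal debe gabe deal.
apply: (gen_comb_Omega_rel q_neq0 HR HO _ _ cal cbe cga cde).
- by rewrite gaal expr2.
- by rewrite gabe; congr (_ *: _); ring.
- rewrite scale1r -(subrK (al * de) (de * al)) deal mulfV // scale1r addrC.
  by congr (_ + _ *: _); field.
- by rewrite debe; congr (_ *: _); field.
Qed.

Lemma Omega_dxdx_coaction i j :
  skew_central x dx (-1) ga -> skew_central x dx 1 de ->
  de * ga = q ^- 2 *: (ga * de) -> ga * ga = 0 ->
  dx' i * dx' j = \sum_(a < n) \sum_(b < n) (- q * Rent R a i b j) *: (dx' b * dx' a).
Proof.
move=> cga cde dega gaga.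
have gade : ga * de = q ^+ 2 *: (de * ga).
  by rewrite dega scalerA mulfV ?scale1r // expf_neq0.
apply: (gen_comb_Omega_rel q_neq0 HR HO _ _ cga cde cga cde).
- by rewrite gaga scaler0.
- by rewrite gade; congr (_ *: _); ring.
- by rewrite gade scalerA -scalerDl; congr (_ *: _); field.
- by rewrite scale1r opprK mulr1 mulfV ?scale1r.
Qed.

End Coaction.

Theorem mainTheorem10 (K : fieldType) (A : algType K) (n : nat) (q : K)
  (R : 'M[K]_(n * n)) (al be ga de : A) (x dx : 'I_n -> A) :
  q != 0 ->
  QYBE R ->
  Hecke q R ->
  Omega_rels q R x dx ->
  GLq11_rels q al be ga de ->
  graded_mixing al be ga de x dx ->
  Omega_rels q R (fun i => al * x i + be * dx i) (fun i => ga * x i + de * dx i).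
Proof.
move=> q_neq0 _ HR HO [_ _ [beal gaal debe dega] [gabe deal] [bebe gaga]].
case/graded_mixing_skew_central=> cal cbe cga cde i j.
split.
- exact: Omega_xx_coaction.
- exact: Omega_dxx_coaction.
- exact: Omega_dxdx_coaction.
Qed.
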